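(* Let $\varphi$ be a real-valued Orlicz integrand. Then $C_\varphi(\mu)$ and $C^\sigma_\varphi(\mu)$ are almost decomposable with respect to $\mu$.
   Context: $(\Omega,\mathcal{A},\mu)$ measure space with nontrivial positive measure, $X$ real Banach space. Orlicz integrand: $\varphi\colon\Omega\times X\to[0,\infty]$ with $\varphi(\omega,\cdot)$ even, convex, lsc, proper, $\varphi(\omega,x)\to0$ as $x\to0$, $\varphi(\omega,x)\to\infty$ as $\|x\|\to\infty$ for a.e. $\omega$, and restriction to $A\times W$ being $\mathcal{A}(A)\otimes\mathcal{B}(W)$-measurable for every set $A$ that is a union of countably many atoms and a $\sigma$-finite set and every separable $W\subset X$; real-valued means $\varphi(\omega,x)<\infty$ for all $x$ and a.e. $\omega$. $L_\varphi(\mu)$: a.e.-classes of strongly measurable $u$ with finite Luxemburg norm $\|u\|_\varphi=\inf\{\alpha>0:\int\varphi(\omega,u/\alpha)d\mu\le1\}$. $C_\varphi(\mu)$: $u\in L_\varphi(\mu)$ with $\|u\chi_{E_n}\|_\varphi\to0$ for every sequence $E_n\in\mathcal{A}$ with $\chi_{E_n}\to0$ a.e.; $C^\sigma_\varphi(\mu)$: its elements vanishing outside a $\sigma$-finite set. A space $S$ of measurable functions $\Omega\to X$ is almost decomposable if for every $u_0\in S$, $F\in\mathcal{A}$ with $\mu(F)<\infty$, $\varepsilon>0$ and bounded strongly measurable $u_1\colon F\to X$ there is measurable $F_\varepsilon\subset F$ with $\mu(F\setminus F_\varepsilon)<\varepsilon$ and $u_0\chi_{\Omega\setminus F_\varepsilon}+u_1\chi_{F_\varepsilon}\in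 S$. *)

From HB Require Import structures.
From mathcomp Require Import all_boot all_order all_algebra.
From mathcomp Require Import all_classical all_reals all_analysis.
From mathcomp Require Import measurable_realfun.
Set Implicit Arguments. Unset Strict Implicit. Unset Printing Implicit Defensive.
Import Order.TTheory GRing.Theory Num.Theory.
Import numFieldNormedType.Exports.
Local Open Scope classical_set_scope.
Local Open Scope ring_scope.

Definition borel_set (R : realType) (X : normedModType R) : set (set X) :=
  <<s [set U : set X | open U] >>.

Definition separable_subset (R : realType) (X : normedModType R) (W : set X) :=
  exists C : set X, [/\ countable C, C `<=` W & W `<=` closure C].

Definition atom d (T : measurableType d) (R : realType)
    (mu : {measure set T -> \bar R}) (E : set T) :=
  [/\ measurable E, (0 < mu E)%E &
      forall F, measurable F -> F `<=` E -> mu F = 0%E \/ mu (E `\` F) = 0%E].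

(* A is the union of countably many atoms and a sigma-finite set
   (an index n with E n = set0 encodes "no atom"; this allows finitely many) *)
Definition atoms_sigma_union d (T : measurableType d) (R : realType)
    (mu : {measure set T -> \bar R}) (A : set T) :=
  exists (E : (set T)^nat) (S : set T),
    [/\ forall n, E n = set0 \/ atom mu (E n),
        sigma_finite S mu &
        A = (\bigcup_n E n) `|` S].

(* The restriction of phi to A x W is A(A) (x) B(W)-measurable, where
   A(A) = trace of the sigma-algebra on A and B(W) = Borel sets of W
   (= traces on W of Borel sets of X). *)
Definition restr_prod_measurable d (T : measurableType d) (R : realType)
    (X : normedModType R) (phi : T -> X -> \bar R) (A : set T) (W : set X) :=
  forall V : set (\bar R), measurable V ->
    <<s A `*` W,
        [set Q : set (T * X) | exists E B, [/\ measurable E, borel_set B &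
                                  Q = (A `&` E) `*` (W `&` B)]] >>
      [set p | (A `*` W) p /\ V (phi p.1 p.2)].

Definition orlicz_integrand d (T : measurableType d) (R : realType)
    (mu : {measure set T -> \bar R}) (X : completeNormedModType R)
    (phi : T -> X -> \bar R) :=
  [/\ forall w x, (0 <= phi w x)%E,
      {ae mu, forall w,
        [/\ forall x, phi w (- x) = phi w x,
            forall (t : R) (x y : X), 0 <= t <= 1 ->
               (phi w ((t *: x + (1 - t) *: y)%R)
                 <= t%:E * phi w x + (1 - t)%:E * phi w y)%E,
            forall (x : X) (a : R),
               (a%:E < phi w x)%E -> (\forall y \near x, (a%:E < phi w y)%E),
            (exists x, (phi w x < +oo)%E) /\
            (phi w x @[x --> (0 : X)] --> 0%E) &
               forall M : R, exists r : R, forall x, r < `|x| -> (M%:E < phi w x)%E]} &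
      forall A W, atoms_sigma_union mu A -> separable_subset W ->
        restr_prod_measurable phi A W].

Definition real_valued_integrand d (T : measurableType d) (R : realType)
    (mu : {measure set T -> \bar R}) (X : completeNormedModType R)
    (phi : T -> X -> \bar R) :=
  {ae mu, forall w, forall x, (phi w x < +oo)%E}.

Definition simple_fun d (T : measurableType d) (R : realType)
    (X : normedModType R) (s : T -> X) :=
  finite_set (range s) /\ forall x, measurable (s @^-1` [set x]).

Definition strongly_measurable d (T : measurableType d) (R : realType)
    (mu : {measure set T -> \bar R}) (X : normedModType R) (u : T -> X) :=
  exists s : nat -> T -> X, (forall n, simple_fun (s n)) /\
    {ae mu, forall w, s n w @[n --> \oo] --> u w}.

(* Luxemburg norm (in \bar R, +oo when the defining set is empty) *)
Definition lux_norm d (T : measurableType d) (R : realType)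
    (mu : {measure set T -> \bar R}) (X : completeNormedModType R)
    (phi : T -> X -> \bar R) (u : T -> X) : \bar R :=
  ereal_inf [set a%:E | a in [set a : R | 0 < a /\
              (\int[mu]_w phi w (a^-1 *: u w) <= 1)%E]].

(* L_phi(mu), as a set of functions (closed under a.e. equality) *)
Definition L_phi d (T : measurableType d) (R : realType)
    (mu : {measure set T -> \bar R}) (X : completeNormedModType R)
    (phi : T -> X -> \bar R) : set (T -> X) :=
  [set u | strongly_measurable mu u /\ (lux_norm mu phi u < +oo)%E].

Definition C_phi d (T : measurableType d) (R : realType)
    (mu : {measure set T -> \bar R}) (X : completeNormedModType R)
    (phi : T -> X -> \bar R) : set (T -> X) :=
  [set u | L_phi mu phi u /\
    forall E : (set T)^nat, (forall n, measurable (E n)) ->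
      {ae mu, forall w, \1_(E n) w @[n --> \oo] --> (0 : R)} ->
      lux_norm mu phi (fun w => \1_(E n) w *: u w) @[n --> \oo] --> 0%E].

Definition C_phi_sigma d (T : measurableType d) (R : realType)
    (mu : {measure set T -> \bar R}) (X : completeNormedModType R)
    (phi : T -> X -> \bar R) : set (T -> X) :=
  [set u | C_phi mu phi u /\
    exists S : set T, sigma_finite S mu /\ {ae mu, forall w, ~ S w -> u w = 0}].

Definition almost_decomposable d (T : measurableType d) (R : realType)
    (mu : {measure set T -> \bar R}) (X : completeNormedModType R)
    (S : set (T -> X)) :=
  forall (u0 : T -> X) (F : set T) (eps : R) (u1 : T -> X),
    S u0 -> measurable F -> (mu F < +oo)%E -> 0 < eps ->
    (exists M : R, forall w, F w -> `|u1 w| <= M) ->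
    strongly_measurable mu (fun w => \1_F w *: u1 w) ->
    exists Fe : set T, [/\ measurable Fe, Fe `<=` F,
      (mu (F `\` Fe) < eps%:E)%E &
      S (fun w => \1_(~` Fe) w *: u0 w + \1_Fe w *: u1 w)].

From HB Require Import structures.
From mathcomp Require Import all_boot all_order all_algebra.
From mathcomp Require Import all_classical all_reals all_analysis.
From mathcomp Require Import measurable_realfun.
Import Order.TTheory GRing.Theory Num.Theory.
Import numFieldNormedType.Exports HBNNSimple.
Local Open Scope classical_set_scope.
Local Open Scope ring_scope.
Set Implicit Arguments. Unset Strict Implicit. Unset Printing Implicit Defensive.

(* Approximate [1_F u1] by simple functions [t_n].  Midpoint convexity of
   [phi w] and [phi w x -> 0] as [x -> 0] give
   [phi w (k u1) <= limsup_n phi w (2k t_n) + 1], a measurable majorant, finite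
   a.e. because [phi] is real-valued.  Removing from [F] a set of measure
   [< eps] (at most [eps / 2^(k+1)] for each [k]) leaves [Fe] on which
   [phi w (s u1 w) <= c_k] for [0 <= s <= k].  On [Fe] the patched function
   is then controlled through [mu Fe < +oo] (finite Luxemburg norm) and
   [mu (Fe `&` E_n) -> 0] (absolute continuity), off [Fe] it is [u0]. *)

Section ereal_limits.
Context (R : realType).
Local Open Scope ereal_scope.

Lemma cvge_lt T (F : set_system T) {FF : Filter F} (f : T -> \bar R) (l e : R) :
  f x @[x --> F] --> l%:E -> (l < e)%R -> \forall x \near F, f x < e%:E.
Proof.
move=> /fine_cvgP[f_fin /cvgr_lt f_lt] le.
by apply: filterS2 f_fin (f_lt e le) => x fx; rewrite -(fineK fx) lte_fin.
Qed.

Lemma cvge0_ge0_le (u : (\bar R)^nat) : (forall n, 0 <= u n) ->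
  (forall e : R, (0 < e)%R -> \forall n \near \oo, u n <= e%:E) ->
  u n @[n --> \oo] --> 0.
Proof.
move=> u0 ue; apply/fine_cvgP; split.
  apply: filterS (ue 1%R ltr01) => n h.
  by rewrite ge0_fin_numE // (le_lt_trans h) // ltry.
apply/cvgrPdist_le => e e0; apply: filterS (ue e e0) => n h /=.
have fn : u n \is a fin_num by rewrite ge0_fin_numE // (le_lt_trans h) // ltry.
by rewrite sub0r normrN ger0_norm ?fine_ge0 // -lee_fin fineK.
Qed.

Lemma limn_esup_le (u : (\bar R)^nat) b :
  (\forall n \near \oo, u n <= b) -> limn_esup u <= b.
Proof.
move=> [N _ uN]; apply: le_trans (ereal_inf_lbound _) _.
  by exists [set n | (N <= n)%N] => //; exists N.
by apply: ge_ereal_sup => _ [n /= Nn <-]; exact: uN.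
Qed.

Lemma limn_esup_ge (u : (\bar R)^nat) a :
  (\forall n \near \oo, a <= u n) -> a <= limn_esup u.
Proof.
move=> [N _ uN]; apply: le_ereal_inf_tmp => _ [V [M _ MV] <-].
apply: le_trans (ereal_sup_ubound _); last first.
  by exists (maxn M N) => //; apply: MV; rewrite /= leq_maxl.
by apply: uN; rewrite /= leq_maxr.
Qed.

End ereal_limits.

Section convex_integrand.
Context (R : realType) (X : normedModType R) (f : X -> \bar R).
Hypothesis f_ge0 : forall x, (0 <= f x)%E.
Hypothesis f_convex : forall (t : R) (x y : X), 0 <= t <= 1 ->
  (f ((t *: x + (1 - t) *: y)%R) <= t%:E * f x + (1 - t)%:E * f y)%E.
Hypothesis f_cvg0 : f x @[x --> (0 : X)] --> 0%E.

Lemma integrand0 : f 0 = 0%E.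
Proof.
have /fine_cvgP[f_fin /cvgrPdist_le f_cvg] := f_cvg0.
have f0_fin : f 0 \is a fin_num := nbhs_singleton f_fin.
rewrite -(fineK f0_fin); congr (_%:E); apply/eqP; rewrite -normr_le0.
apply/ler_addgt0Pr => e /f_cvg/nbhs_singleton.
by rewrite /= sub0r normrN add0r.
Qed.

Lemma integrandZ_le (t : R) x : 0 <= t <= 1 -> (f (t *: x) <= t%:E * f x)%E.
Proof.
by move=> /(f_convex x 0); rewrite scaler0 addr0 integrand0 mule0 adde0.
Qed.

Lemma integrandZ_le_half (t : R) x : 0 <= t <= 2^-1 ->
  (f (t *: x) <= 2^-1%:E * f x)%E.
Proof.
move=> /andP[t0 t2]; apply: le_trans (integrandZ_le _ _) _.
  by rewrite t0 (le_trans t2) // invf_le1 // ler1n.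
by rewrite lee_wpmul2r // lee_fin.
Qed.

Lemma integrandZ_homo (s t : R) x : 0 <= s <= t -> (f (s *: x) <= f (t *: x))%E.
Proof.
move=> /andP[s0 st]; have [t0|t0] := eqVneq t 0.
  have -> : s = 0 by apply/eqP; rewrite eq_le s0 andbT -t0.
  by rewrite t0.
have tpos : 0 < t by rewrite lt_neqAle eq_sym t0 (le_trans s0 st).
have -> : s *: x = (s / t) *: (t *: x) by rewrite scalerA divfK.
apply: le_trans (integrandZ_le _ _) _.
  by rewrite divr_ge0 ?(ltW tpos) //= ler_pdivrMr // mul1r.
by rewrite -[leRHS]mul1e lee_wpmul2r // lee_fin ler_pdivrMr // mul1r.
Qed.

Lemma integrand_cvg0_lt1 (y : nat -> X) : y n @[n --> \oo] --> (0 : X) ->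
  \forall n \near \oo, (f (y n) < 1)%E.
Proof. by move=> y0; apply: cvge_lt ltr01; exact: cvg_comp y0 f_cvg0. Qed.

(* midpoint convexity applied to [c a = (2c b + 2c (a - b)) / 2] *)
Lemma integrand_le_shift (c : R) (a b : X) : (f ((2 * c) *: (a - b)) <= 1)%E ->
  (f (c *: a) <= f ((2 * c) *: b) + 1)%E.
Proof.
move=> fab.
have half : (1 - 2^-1 : R) = 2^-1 by rewrite {1}(splitr 1) mul1r addrK.
have -> : c *: a = 2^-1 *: ((2 * c) *: b) + (1 - 2^-1) *: ((2 * c) *: (a - b)).
  rewrite half !scalerA mulrA mulVf ?pnatr_eq0 // mul1r -scalerDr.
  by rewrite addrC subrK.
apply: le_trans (f_convex _ _ _) _.
  by rewrite invr_ge0 ler0n /= invf_le1 // ler1n.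
rewrite half; apply: leeD.
  by rewrite -[leRHS]mul1e lee_wpmul2r // lee_fin invf_le1 // ler1n.
apply: le_trans (lee_wpmul2l _ fab) _; first by rewrite lee_fin invr_ge0.
by rewrite mule1 lee_fin invf_le1 // ler1n.
Qed.

Variables (s : nat -> X) (u : X).
Hypothesis s_cvg : s n @[n --> \oo] --> u.

Let gap_cvg0 (c : R) : c *: (u - s n) @[n --> \oo] --> (0 : X).
Proof.
rewrite -(scaler0 _ c) -(subrr u); apply: cvgZl_tmp.
by apply: cvgB => //; exact: cvg_cst.
Qed.

Lemma integrand_le_limn_esup (k : R) :
  (f (k *: u) <= limn_esup (fun n => f ((2 * k) *: s n) + 1))%E.
Proof.
apply: limn_esup_ge; have := integrand_cvg0_lt1 (gap_cvg0 (2 * k)).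
by apply: filterS => n /ltW; exact: integrand_le_shift.
Qed.

Lemma limn_esup_integrand_lt_pinfty (k : R) : (forall x, f x < +oo)%E ->
  (limn_esup (fun n => f ((2 * k) *: s n) + 1) < +oo)%E.
Proof.
move=> f_fin; apply: (@le_lt_trans _ _ (f ((2 * (2 * k)) *: u) + 1 + 1)%E).
  apply: limn_esup_le; have := integrand_cvg0_lt1 (gap_cvg0 (- (2 * (2 * k)))).
  apply: filterS => n; rewrite scaleNr -scalerN opprB => /ltW fsu.
  by rewrite leeD2r // integrand_le_shift.
by rewrite -addeA lte_add_pinfty // -EFinD ltry.
Qed.

End convex_integrand.

Definition finite_convex_integrand (R : realType) (X : normedModType R)
    (f : X -> \bar R) :=
  [/\ forall x, (0 <= f x)%E,
      forall (t : R) (x y : X), 0 <= t <= 1 ->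
        (f ((t *: x + (1 - t) *: y)%R) <= t%:E * f x + (1 - t)%:E * f y)%E,
      f x @[x --> (0 : X)] --> 0%E &
      forall x, (f x < +oo)%E].

Lemma orlicz_integrand_ae_finite_convex d (T : measurableType d) (R : realType)
    (mu : {measure set T -> \bar R}) (X : completeNormedModType R)
    (phi : T -> X -> \bar R) :
  orlicz_integrand mu phi -> real_valued_integrand mu phi ->
  {ae mu, forall w, finite_convex_integrand (phi w)}.
Proof.
move=> [phi_ge0 phi_ae _] phi_fin; apply: filterS2 phi_ae phi_fin.
by move=> w [_ fconv _ [_ f_cvg0] _] f_fin; split.
Qed.

Section sigma_finite_sets.
Context d (T : measurableType d) (R : realType) (mu : {measure set T -> \bar R}).

Lemma fin_measure_sigma_finite (F : set T) :
  measurable F -> (mu F < +oo)%E -> sigma_finite F mu.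
Proof. by move=> mF F_fin; exists (fun=> F) => //; rewrite bigcup_const. Qed.

Lemma sigma_finiteU (A B : set T) : sigma_finite A mu -> sigma_finite B mu ->
  sigma_finite (A `|` B) mu.
Proof.
move=> [G -> G_fin] [H -> H_fin]; exists (fun i => G i `|` H i).
  by rewrite bigcupU.
move=> i; have [mG G_lt] := G_fin i; have [mH H_lt] := H_fin i.
split; first exact: measurableU.
by apply: le_lt_trans (measureU2 _ mG mH) _; exact: lte_add_pinfty.
Qed.

End sigma_finite_sets.

Section integrand_measurability.
Context d (T : measurableType d) (R : realType) (mu : {measure set T -> \bar R})
  (X : completeNormedModType R) (phi : T -> X -> \bar R).
Hypothesis phi_meas : forall A W, atoms_sigma_union mu A -> separable_subset W ->
  restr_prod_measurable phi A W.

Lemma measurable_trace_section (F : set T) (x : X) Q : measurable F ->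
  <<s F `*` [set x],
      [set Q : set (T * X) | exists E B, [/\ measurable E, borel_set B &
                                Q = (F `&` E) `*` ([set x] `&` B)]] >> Q ->
  measurable (F `&` [set w | Q (w, x)]).
Proof.
move=> mF; move: Q; apply: smallest_sub; first split => /=.
- by rewrite (_ : _ `&` _ = set0) //; apply/seteqP; split => w //= [].
- move=> A mA; rewrite (_ : _ `&` _ = F `\` (F `&` [set w | A (w, x)])).
    exact: measurableD.
  apply/seteqP; split => w /=; first by move=> [Fw [_ nA]]; split => // -[].
  by move=> [Fw nA]; split => //; split => [|Aw]; [split|apply: nA].
- move=> A mA; rewrite (_ : _ `&` _ = \bigcup_k (F `&` [set w | A k (w, x)])).
    exact: bigcupT_measurable.
  apply/seteqP; split => w /=; first by move=> [Fw [k _ Ak]]; exists k.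
  by move=> [k _ [Fw Ak]]; split => //; exists k.
move=> Q [E [B [mE _ ->]]] /=.
have [Bx|nBx] := pselect (B x).
  rewrite (_ : _ `&` _ = F `&` E); first exact: measurableI.
  by apply/seteqP; split => w /=; [move=> [_ [[]]]|move=> [Fw Ew]; split].
by rewrite (_ : _ `&` _ = set0) //; apply/seteqP; split => w //= [_ [_ [_ ?]]].
Qed.

Lemma sigma_finite_atoms_sigma_union (F : set T) :
  sigma_finite F mu -> atoms_sigma_union mu F.
Proof.
move=> Fsigma; exists (fun _ => set0), F; split => //; first by left.
by rewrite bigcup0 ?set0U.
Qed.

Lemma measurable_integrand_at (F : set T) (x : X) :
  measurable F -> sigma_finite F mu -> measurable_fun F (phi ^~ x).
Proof.
move=> mF Fsigma _ Y mY.
have x_sep : separable_subset [set x].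
  by exists [set x]; split; [exact: countable1|by []|exact: subset_closure].
have := phi_meas (sigma_finite_atoms_sigma_union Fsigma) x_sep mY.
move/(measurable_trace_section mF); congr measurable.
by apply/seteqP; split => w /= [Fw]; [case|split].
Qed.

Lemma measurable_integrand_simple (F : set T) (c : R) (s : T -> X) :
  measurable F -> sigma_finite F mu -> simple_fun s ->
  measurable_fun F (fun w => phi w (c *: s w)).
Proof.
move=> mF Fsigma [s_fin s_meas] _ Y mY.
rewrite (_ : _ `&` _ = \bigcup_(y in range s)
   (s @^-1` [set y] `&` (F `&` phi ^~ (c *: y) @^-1` Y))).
  apply: fin_bigcup_measurable => // y _.
  by apply: measurableI => //; exact: measurable_integrand_at.
apply/seteqP; split => w /=.
  by move=> [Fw Yw]; exists (s w) => //; exists w.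
by move=> [y _ [/= <- [Fw Yw]]].
Qed.

End integrand_measurability.

Section small_exceptional_set.
Context d (T : measurableType d) (R : realType) (mu : {measure set T -> \bar R}).

Lemma nonincreasing_negligible_cvg_mu0 (B : (set T)^nat) :
  (forall n, measurable (B n)) -> (forall n m, (n <= m)%N -> B m `<=` B n) ->
  (mu (B 0%N) < +oo)%E -> mu.-negligible (\bigcap_n B n) ->
  mu (B n) @[n --> \oo] --> 0%E.
Proof.
move=> mB B_dec B0_fin capB0.
have mcapB : measurable (\bigcap_n B n) by exact: bigcapT_measurable.
rewrite -(measure_negligible mcapB capB0).
apply: nonincreasing_cvg_mu => // n m nm; apply/subsetPset; exact: B_dec.
Qed.

Lemma measureI_cvg0 (G : set T) (E : (set T)^nat) :
  measurable G -> (mu G < +oo)%E -> (forall n, measurable (E n)) ->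
  {ae mu, forall w, \1_(E n) w @[n --> \oo] --> (0 : R)} ->
  mu (G `&` E n) @[n --> \oo] --> 0%E.
Proof.
move=> mG G_fin mE [NE [mNE NE0 /subsetCl E_cvg]].
pose B n := G `&` \bigcup_(m in [set m | (n <= m)%N]) E m.
have mB n : measurable (B n).
  by apply: measurableI => //; exact: bigcup_measurable.
have B_dec n m : (n <= m)%N -> B m `<=` B n.
  move=> nm w [Gw [k /= mk Ek]]; split => //.
  by exists k => //; exact: leq_trans mk.
have B0_fin : (mu (B 0%N) < +oo)%E.
  by apply: le_lt_trans G_fin; apply: le_measure; rewrite ?inE // => w [].
have capB_NE : \bigcap_n B n `<=` NE.
  move=> w Bw; apply: contrapT => /E_cvg /= /cvgrPdist_lt/(_ _ ltr01)[n _ En].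
  have [_ [k /= nk Ek]] := Bw n I; have := En k nk.
  by rewrite /= indicE mem_set // sub0r normrN normr1 ltxx.
have capB0 : mu.-negligible (\bigcap_n B n) by exists NE.
have B_cvg0 := nonincreasing_negligible_cvg_mu0 mB B_dec B0_fin capB0.
apply: cvge0_ge0_le => // e e0; apply: filterS (cvge_lt B_cvg0 e0) => n /ltW.
apply: le_trans; apply: le_measure; rewrite ?inE //; first exact: measurableI.
by move=> w [Gw Enw]; split => //; exists n => /=.
Qed.

Lemma measure_gt_level_lt (F N : set T) (h : T -> \bar R) (e : R) :
  measurable F -> (mu F < +oo)%E -> measurable_fun F h ->
  measurable N -> mu N = 0%E -> (forall w, F w -> ~ N w -> (h w < +oo)%E) ->
  0 < e -> exists c : R, (mu (F `&` [set w | c%:E < h w]) < e%:E)%E.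
Proof.
move=> mF F_fin mh mN N0 h_fin e0.
pose B m := F `&` [set w | m%:R%:E < h w]%E.
have mB m : measurable (B m) by exact: emeasurable_fun_o_infty.
have B_dec n m : (n <= m)%N -> B m `<=` B n.
  move=> nm w [Fw hw]; split => //.
  by apply: le_lt_trans hw; rewrite lee_fin ler_nat.
have B0_fin : (mu (B 0%N) < +oo)%E.
  by apply: le_lt_trans F_fin; apply: le_measure; rewrite ?inE // => w [].
have capB_N : \bigcap_m B m `<=` N.
  move=> w Bw; apply: contrapT => Nw; have [Fw h0] := Bw 0%N I.
  have h_fin_w : h w \is a fin_num by rewrite ge0_fin_numE ?h_fin ?(ltW h0).
  have [_ /=] := Bw (Num.truncn (fine (h w))).+1 I.
  by rewrite -(fineK h_fin_w) lte_fin ltNge ltW // truncnS_gt.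
have capB0 : mu.-negligible (\bigcap_m B m) by exists N.
have B_cvg0 := nonincreasing_negligible_cvg_mu0 mB B_dec B0_fin capB0.
have [M _ BM] := cvge_lt B_cvg0 e0.
by exists M%:R; exact: (BM M (leqnn M)).
Qed.

Lemma bounded_off_small_set (F N : set T) (h : nat -> T -> \bar R) (e : R) :
  measurable F -> (mu F < +oo)%E -> (forall k, measurable_fun F (h k)) ->
  measurable N -> mu N = 0%E ->
  (forall w, F w -> ~ N w -> forall k, (h k w < +oo)%E) -> 0 < e ->
  exists (G : set T) (c : nat -> R), [/\ measurable G, G `<=` F `\` N,
    (mu (F `\` G) < e%:E)%E & forall k w, G w -> (h k w <= (c k)%:E)%E].
Proof.
move=> mF F_fin mh mN N0 h_fin e0.
pose e_ k := e / 2 / (2 ^ k.+1)%:R.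
have e_gt0 k : 0 < e_ k by rewrite !divr_gt0 // ltr0n expn_gt0.
have /choice[c hc] k : exists c : R,
    (mu (F `&` [set w | c%:E < h k w]) < (e_ k)%:E)%E.
  by apply: (measure_gt_level_lt (N := N)) => // w Fw Nw; exact: h_fin.
pose B k := F `&` [set w | (c k)%:E < h k w]%E.
have mB k : measurable (B k) by exact: emeasurable_fun_o_infty.
have mbigB : measurable (\bigcup_k B k) by exact: bigcupT_measurable.
exists (F `\` (\bigcup_k B k `|` N)), c; split.
- by apply: measurableD => //; exact: measurableU.
- by move=> w [Fw BNw]; split => // Nw; apply: BNw; right.
- apply: (@le_lt_trans _ _ (mu (\bigcup_k B k `|` N))).
    apply: le_measure; rewrite ?inE.
    - by apply: measurableD => //; apply: measurableD => //; exact: measurableU.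
    - exact: measurableU.
    - by rewrite setDD; exact: subIsetr.
  rewrite (measureU0 mbigB mN N0).
  apply: (@le_lt_trans _ _ (e / 2)%:E); last first.
    by rewrite lte_fin ltr_pdivrMr // ltr_pMr // ltr1n.
  apply: le_trans (measure_sigma_subadditive mu mB mbigB _) _ => //.
  have e2_ge0 : 0 <= e / 2 by rewrite divr_ge0 ?ltW.
  apply: le_trans (epsilon_trick0 xpredT e2_ge0).
  by apply: lee_nneseries => // k _; exact/ltW/hc.
- move=> k w [Fw BNw]; rewrite leNgt; apply/negP => hkw.
  by apply: BNw; left; exists k.
Qed.

End small_exceptional_set.

Section local_bounds.
Context d (T : measurableType d) (R : realType) (mu : {measure set T -> \bar R})
  (X : completeNormedModType R) (phi : T -> X -> \bar R).
Hypothesis phi_meas : forall A W, atoms_sigma_union mu A -> separable_subset W ->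
  restr_prod_measurable phi A W.
Variable N : set T.
Hypotheses (mN : measurable N) (N0 : mu N = 0%E)
  (phiN : forall w, ~ N w -> finite_convex_integrand (phi w)).

(* [u] need not be bounded: off a small set, finiteness of [phi] alone bounds
   [phi w (s *: u w)] uniformly for [s] in bounded intervals. *)
Lemma integrand_bounded_off_small_set (F : set T) (u : T -> X) (e : R) :
  measurable F -> (mu F < +oo)%E ->
  strongly_measurable mu (fun w => \1_F w *: u w) -> 0 < e ->
  exists (G : set T) (c : nat -> R), [/\ measurable G, G `<=` F `\` N,
    (mu (F `\` G) < e%:E)%E &
    forall k w s, G w -> 0 <= s <= k%:R -> (phi w (s *: u w) <= (c k)%:E)%E].
Proof.
move=> mF F_fin [t [t_simple [Nt [mNt Nt0 /subsetCl t_cvg]]]] e0.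
pose H k w := limn_esup (fun n => phi w ((2 * k%:R) *: t n w) + 1)%E.
have mH k : measurable_fun F (H k).
  apply: measurable_fun_limn_esup => n; apply: emeasurable_funD => //.
  exact: measurable_integrand_simple (fin_measure_sigma_finite mF F_fin) _.
have H_bound k w : F w -> ~ (N `|` Nt) w ->
    (phi w (k%:R *: u w) <= H k w)%E /\ (H k w < +oo)%E.
  move=> Fw /not_orP[Nw Ntw]; have [f0 fconv f_cvg0 f_fin] := phiN Nw.
  have /= := t_cvg w Ntw; rewrite indicE mem_set // scale1r => tw_cvg.
  split; first exact: integrand_le_limn_esup.
  exact: (limn_esup_integrand_lt_pinfty f0 fconv f_cvg0 tw_cvg).
have mNNt : measurable (N `|` Nt) by exact: measurableU.
have NNt0 : mu (N `|` Nt) = 0%E by rewrite measureU0.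
have [|G [c [mG GFN FG_small Hc]]] :=
  bounded_off_small_set mF F_fin mH mNNt NNt0 _ e0.
  by move=> w Fw NNtw k; have [] := H_bound k w Fw NNtw.
exists G, c; split => //.
  by move=> w /GFN[Fw NNtw]; split => // Nw; apply: NNtw; left.
move=> k w s Gw s0k; have [Fw NNtw] := GFN w Gw.
have /not_orP[Nw _] := NNtw; have [f0 fconv f_cvg0 _] := phiN Nw.
apply: le_trans (integrandZ_homo f0 fconv f_cvg0 (u w) s0k) _.
by apply: le_trans (Hc k w Gw); case: (H_bound k w Fw NNtw).
Qed.

End local_bounds.

Section integral_nonmeasurable.
Context d (T : measurableType d) (R : realType) (mu : {measure set T -> \bar R}).
Local Open Scope ereal_scope.

Lemma ge0_le_integral_nonmeasurable (f g : T -> \bar R) :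
  (forall x, 0 <= f x) -> (forall x, f x <= g x) ->
  \int[mu]_x f x <= \int[mu]_x g x.
Proof.
move=> f0 fg; have g0 x : 0 <= g x by apply: le_trans (fg x).
rewrite ge0_integralTE // ge0_integralTE //.
apply: ereal_sup_le => _ [h hf <-]; exists h => //= x.
exact: le_trans (fg x).
Qed.

(* Only [k] has to be measurable: the simple minorants of [f] are split
   along [A]. *)
Lemma ge0_integral_le_split (A : set T) (f g k : T -> \bar R) (r : R) :
  measurable A -> measurable_fun setT k -> (0 < r)%R ->
  (forall x, 0 <= f x) -> (forall x, 0 <= g x) -> (forall x, 0 <= k x) ->
  (forall x, A x -> f x <= r%:E * g x) ->
  {ae mu, forall x, ~ A x -> f x <= k x} ->
  \int[mu]_x f x <= r%:E * \int[mu]_x g x + \int[mu]_x k x.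
Proof.
move=> mA mk r0 f0 g0 k0 fgA fk.
rewrite ge0_integralTE //; apply: ge_ereal_sup => _ [h hf <-].
rewrite -integralT_nnsfun.
pose hA x := (h x * \1_A x)%:E.
have mhA : measurable_fun setT hA.
  apply/measurable_EFinP; apply: measurable_funM => //; exact: measurable_indic.
have hA0 x : 0 <= hA x by rewrite lee_fin mulr_ge0.
have h_split : \int[mu]_x (h x)%:E <= \int[mu]_x (hA x + k x).
  apply: ae_ge0_le_integral => //.
  - by move=> x _; rewrite lee_fin.
  - exact/measurable_EFinP.
  - by move=> x _; rewrite adde_ge0.
  - exact: emeasurable_funD.
  apply: filterS fk => x fkx _; have [Ax|nAx] := pselect (A x).
    by rewrite /hA indicE mem_set // mulr1 leeDl.
  rewrite /hA indicE memNset // mulr0 add0e.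
  exact: le_trans (hf x) (fkx nAx).
apply: le_trans h_split _; rewrite ge0_integralD //; apply: leeD2r.
have -> : \int[mu]_x hA x = r%:E * \int[mu]_x (r^-1%:E * hA x).
  rewrite ge0_integralZl_EFin ?invr_ge0 ?(ltW r0) // muleA -EFinM.
  by rewrite divff ?gt_eqF // mul1e.
apply: lee_wpmul2l; first by rewrite lee_fin ltW.
apply: ge0_le_integral_nonmeasurable => x.
  by rewrite mule_ge0 // lee_fin invr_ge0 ltW.
rewrite /hA indicE; have [Ax|nAx] := pselect (A x).
  rewrite mem_set // mulr1 -lee_pdivlMl // ?invr_gt0 // invrK.
  exact: le_trans (hf x) (fgA x Ax).
by rewrite memNset // mulr0 mule0.
Qed.

End integral_nonmeasurable.

Section patch.
Context (T : Type) (R : pzRingType) (X : lmodType R).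

Definition patch (A : set T) (f g : T -> X) w :=
  \1_(~` A) w *: f w + \1_A w *: g w.

Lemma patch_in A f g w : A w -> patch A f g w = g w.
Proof.
move=> Aw; rewrite /patch !indicE (mem_set Aw) memNset; last exact.
by rewrite scale0r add0r scale1r.
Qed.

Lemma patch_out A f g w : ~ A w -> patch A f g w = f w.
Proof.
move=> nAw; rewrite /patch !indicE (mem_set (nAw : (~` A) w)) (memNset nAw).
by rewrite scale0r addr0 scale1r.
Qed.

End patch.

Section patch_measurability.
Context d (T : measurableType d) (R : realType) (mu : {measure set T -> \bar R})
  (X : normedModType R).

Lemma simple_fun_patch (A : set T) (s t : T -> X) : measurable A ->
  simple_fun s -> simple_fun t -> simple_fun (patch A s t).
Proof.
move=> mA [s_fin s_meas] [t_fin t_meas]; split.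
  apply: (@sub_finite_set _ _ (range s `|` range t)); last by rewrite finite_setU.
  move=> _ [w _ <-]; have [Aw|nAw] := pselect (A w).
    by right; rewrite patch_in //; exists w.
  by left; rewrite patch_out //; exists w.
move=> y; rewrite (_ : _ @^-1` _ =
    (~` A `&` s @^-1` [set y]) `|` (A `&` t @^-1` [set y])).
  by apply: measurableU; apply: measurableI => //; exact: measurableC.
apply/seteqP; split => w /=.
  have [Aw|nAw] := pselect (A w).
    by rewrite patch_in // => <-; right.
  by rewrite patch_out // => <-; left.
by case=> -[Aw <-]; [rewrite patch_out|rewrite patch_in].
Qed.

Lemma strongly_measurable_patch (F A : set T) (u v : T -> X) :
  measurable A -> A `<=` F -> strongly_measurable mu u ->
  strongly_measurable mu (fun w => \1_F w *: v w) ->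
  strongly_measurable mu (patch A u v).
Proof.
move=> mA AF [s [s_simple [Ns [mNs Ns0 /subsetCl s_cvg]]]].
move=> [t [t_simple [Nt [mNt Nt0 /subsetCl t_cvg]]]].
exists (fun n => patch A (s n) (t n)); split.
  by move=> n; exact: simple_fun_patch.
exists (Ns `|` Nt); split; [exact: measurableU|by rewrite measureU0|].
apply: subsetCl => w /not_orP[Nsw Ntw] /=.
have [Aw|nAw] := pselect (A w).
  rewrite patch_in //; have /= := t_cvg w Ntw.
  rewrite indicE mem_set ?scale1r; last exact: AF.
  by apply: cvg_trans; apply: near_eq_cvg; near=> n; rewrite patch_in.
rewrite patch_out //; have /= := s_cvg w Nsw.
by apply: cvg_trans; apply: near_eq_cvg; near=> n; rewrite patch_out.
Unshelve. all: end_near.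
Qed.

End patch_measurability.

Section luxemburg_norm.
Context d (T : measurableType d) (R : realType) (mu : {measure set T -> \bar R})
  (X : completeNormedModType R) (phi : T -> X -> \bar R).

Lemma lux_norm_ge0 (u : T -> X) : (0 <= lux_norm mu phi u)%E.
Proof. by apply: le_ereal_inf_tmp => _ [a [a0 _] <-]; rewrite lee_fin ltW. Qed.

Lemma lux_norm_le (u : T -> X) (a : R) : 0 < a ->
  (\int[mu]_w phi w (a^-1 *: u w) <= 1)%E -> (lux_norm mu phi u <= a%:E)%E.
Proof. by move=> a0 ha; apply: ereal_inf_lbound; exists a. Qed.

Lemma lux_norm_lt (u : T -> X) (x : \bar R) : (lux_norm mu phi u < x)%E ->
  exists a : R,
    [/\ 0 < a, (a%:E < x)%E & (\int[mu]_w phi w (a^-1 *: u w) <= 1)%E].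
Proof. by move=> /ereal_inf_lt[_ [a [a0 ha] <-] ax]; exists a. Qed.

End luxemburg_norm.

Section patch_in_C_phi.
Context d (T : measurableType d) (R : realType) (mu : {measure set T -> \bar R})
  (X : completeNormedModType R) (phi : T -> X -> \bar R).
Hypothesis phi_ge0 : forall w x, (0 <= phi w x)%E.
Variable N : set T.
Hypotheses (mN : measurable N) (N0 : mu N = 0%E)
  (phiN : forall w, ~ N w -> finite_convex_integrand (phi w)).

Lemma integral_patch_le1 (Fe E : set T) (u0 u1 : T -> X) (a b C : R) :
  measurable Fe -> measurable E -> 0 < b -> 2 * b <= a -> 0 <= C ->
  (\int[mu]_w phi w (b^-1 *: (\1_E w *: u0 w)) <= 1)%E ->
  (forall w, Fe w -> (phi w (a^-1 *: u1 w) <= C%:E)%E) ->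
  (C%:E * mu (Fe `&` E) <= 2^-1%:E)%E ->
  (\int[mu]_w phi w (a^-1 *: (\1_E w *: patch Fe u0 u1 w)) <= 1)%E.
Proof.
move=> mFe mE b0 ba C0 u0_int u1_le FeE_small.
have a0 : 0 < a by apply: lt_le_trans ba; rewrite mulr_gt0.
have mA : measurable (~` Fe `&` ~` N) by apply: measurableI; exact: measurableC.
have mFeE : measurable (Fe `&` E) by exact: measurableI.
apply: le_trans (ge0_integral_le_split (A := ~` Fe `&` ~` N)
   (g := fun w => phi w (b^-1 *: (\1_E w *: u0 w)))
   (k := fun w => (C * \1_(Fe `&` E) w)%:E) (r := 2^-1) mA _ _ _ _ _ _ _) _.
- apply/measurable_EFinP; apply: measurable_funM => //; exact: measurable_indic.
- by rewrite invr_gt0.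
- by [].
- by [].
- by move=> w; rewrite lee_fin mulr_ge0.
- move=> w [nFew nNw]; have [_ fconv f_cvg0 _] := phiN nNw.
  rewrite patch_out // (_ : a^-1 *: _ = (b / a) *: (b^-1 *: (\1_E w *: u0 w))).
    apply: integrandZ_le_half => //; rewrite divr_ge0 ?(ltW b0) ?(ltW a0) //=.
    by rewrite ler_pdivrMr // mulrC ler_pdivlMr // mulrC.
  by rewrite [RHS]scalerA mulrAC mulfV ?gt_eqF // mul1r.
- exists N; split => //; apply: subsetCl => w nNw /= nAw.
  have Few : Fe w by apply: contrapT => nFew; apply: nAw.
  have [_ fconv f_cvg0 _] := phiN nNw; rewrite patch_in // !indicE.
  have [Ew|nEw] := pselect (E w).
    rewrite (mem_set Ew) (mem_set (conj Few Ew : (Fe `&` E) w)).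
    by rewrite scale1r mulr1; exact: u1_le.
  have nFeEw : ~ (Fe `&` E) w by case.
  rewrite (memNset nEw) (memNset nFeEw).
  by rewrite scale0r scaler0 integrand0 // mulr0.
have -> : (\int[mu]_w (C * \1_(Fe `&` E) w)%:E = C%:E * mu (Fe `&` E))%E.
  under eq_integral do rewrite EFinM.
  rewrite ge0_integralZl_EFin //; last exact/measurable_EFinP/measurable_indic.
  by rewrite integral_indic // setIT.
apply: le_trans (leeD (lee_wpmul2l _ u0_int) FeE_small) _.
  by rewrite lee_fin invr_ge0.
by rewrite mule1 -EFinD lee_fin [leRHS](splitr 1) mul1r.
Qed.

Lemma lux_norm_patch_lt_pinfty (Fe : set T) (u0 u1 : T -> X) (c : R) :
  measurable Fe -> (mu Fe < +oo)%E -> Fe `<=` ~` N ->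
  (forall w, Fe w -> (phi w (u1 w) <= c%:E)%E) ->
  (lux_norm mu phi u0 < +oo)%E -> (lux_norm mu phi (patch Fe u0 u1) < +oo)%E.
Proof.
move=> mFe Fe_fin FeN u1_le /lux_norm_lt[b [b0 _ u0_int]].
have Fe_fin_num : mu Fe \is a fin_num by rewrite ge0_fin_numE.
pose C := Num.max c 0; pose m := fine (mu Fe).
have [C0 m0] : 0 <= C /\ 0 <= m by rewrite le_max lexx orbT fine_ge0.
pose a := Num.max (2 * b) (Num.max 1 (2 * (C * m))).
have [ba a1 aCm] : [/\ 2 * b <= a, 1 <= a & 2 * (C * m) <= a].
  by rewrite !le_max !lexx !orbT.
have a0 : 0 < a by apply: lt_le_trans a1.
apply: le_lt_trans (lux_norm_le a0 _) (ltry _).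
have patchT w : patch Fe u0 u1 w = \1_setT w *: patch Fe u0 u1 w.
  by rewrite indicE mem_set // scale1r.
under eq_integral do rewrite patchT.
apply: (integral_patch_le1 (b := b) (C := a^-1 * C)) => //.
- by rewrite mulr_ge0 // invr_ge0 ltW.
- by under eq_integral do rewrite indicE mem_set // scale1r.
- move=> w Few; have [_ fconv f_cvg0 _] := phiN (FeN w Few).
  have a1_01 : 0 <= a^-1 <= 1 by rewrite invr_ge0 ltW //= invf_le1.
  apply: le_trans (integrandZ_le fconv f_cvg0 (u1 w) a1_01) _.
  rewrite EFinM lee_wpmul2l ?lee_fin ?invr_ge0 ?(ltW a0) //.
  by apply: le_trans (u1_le w Few) _; rewrite lee_fin le_max lexx.
- rewrite setIT -(fineK Fe_fin_num) -EFinM lee_fin -mulrA ler_pdivrMl //.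
  by rewrite ler_pdivlMr // mulrC.
Qed.

Lemma lux_norm_indic_patch_cvg0 (Fe : set T) (E : (set T)^nat) (u0 u1 : T -> X)
    (c : nat -> R) :
  measurable Fe -> (mu Fe < +oo)%E ->
  (forall k w s, Fe w -> 0 <= s <= k%:R -> (phi w (s *: u1 w) <= (c k)%:E)%E) ->
  (forall n, measurable (E n)) ->
  {ae mu, forall w, \1_(E n) w @[n --> \oo] --> (0 : R)} ->
  lux_norm mu phi (fun w => \1_(E n) w *: u0 w) @[n --> \oo] --> 0%E ->
  lux_norm mu phi (fun w => \1_(E n) w *: patch Fe u0 u1 w) @[n --> \oo] --> 0%E.
Proof.
move=> mFe Fe_fin u1_le mE E_cvg u0_cvg.
apply: cvge0_ge0_le => [n|e e0]; first exact: lux_norm_ge0.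
pose K := (Num.truncn e^-1).+1; pose C := Num.max (c K) 0.
have C0 : 0 <= C by rewrite le_max lexx orbT.
have eK : e^-1 <= K%:R by rewrite ltW // truncnS_gt.
have delta0 : 0 < 2^-1 / (C + 1) by rewrite divr_gt0 // ltr_wpDl.
have e2_gt0 : 0 < e / 2 by rewrite divr_gt0.
have FeE_cvg0 := measureI_cvg0 mFe Fe_fin mE E_cvg.
apply: filterS2 (cvge_lt u0_cvg e2_gt0) (cvge_lt FeE_cvg0 delta0).
move=> n /lux_norm_lt[b [b0 be u0_int]] FeE_lt.
apply: (lux_norm_le e0); apply: (integral_patch_le1 (b := b) (C := C)) => //.
- by rewrite -ler_pdivlMl // mulrC ltW // -lte_fin.
- move=> w Few; apply: le_trans (u1_le K w e^-1 Few _) _.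
    by rewrite invr_ge0 ltW.
  by rewrite lee_fin le_max lexx.
- apply: le_trans (lee_wpmul2l _ (ltW FeE_lt)) _; first by rewrite lee_fin.
  rewrite -EFinM lee_fin mulrCA ger_pMr ?invr_gt0 // ler_pdivrMr ?ltr_wpDl //.
  by rewrite mul1r lerDl.
Qed.

End patch_in_C_phi.

Section almost_decomposable.
Context d (T : measurableType d) (R : realType) (mu : {measure set T -> \bar R})
  (X : completeNormedModType R) (phi : T -> X -> \bar R).

Hypothesis phi_ge0 : forall w x, (0 <= phi w x)%E.
Hypothesis phi_meas : forall A W, atoms_sigma_union mu A -> separable_subset W ->
  restr_prod_measurable phi A W.
Variable N : set T.
Hypotheses (mN : measurable N) (N0 : mu N = 0%E)
  (phiN : forall w, ~ N w -> finite_convex_integrand (phi w)).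

Lemma C_phi_patch (u0 u1 : T -> X) (F : set T) (e : R) :
  C_phi mu phi u0 -> measurable F -> (mu F < +oo)%E -> 0 < e ->
  strongly_measurable mu (fun w => \1_F w *: u1 w) ->
  exists Fe : set T, [/\ measurable Fe, Fe `<=` F,
    (mu (F `\` Fe) < e%:E)%E & C_phi mu phi (patch Fe u0 u1)].
Proof.
move=> [[u0_meas u0_lux] u0_cont] mF F_fin e0 u1_meas.
have [Fe [c [mFe FeFN FeF_small u1_le]]] :=
  integrand_bounded_off_small_set phi_meas mN N0 phiN mF F_fin u1_meas e0.
have FeF : Fe `<=` F by move=> w /FeFN[].
have FeN : Fe `<=` ~` N by move=> w /FeFN[].
have Fe_fin : (mu Fe < +oo)%E.
  by apply: le_lt_trans F_fin; apply: le_measure; rewrite ?inE.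
exists Fe; split => //; split; first split.
- exact: strongly_measurable_patch FeF u0_meas u1_meas.
- apply: (lux_norm_patch_lt_pinfty phi_ge0 mN N0 phiN (c := c 1%N)) => // w Few.
  by rewrite -[u1 w]scale1r; apply: u1_le; rewrite ?ler01 ?lexx.
- move=> E mE E_cvg.
  apply: (lux_norm_indic_patch_cvg0 phi_ge0 mN N0 phiN mFe Fe_fin u1_le) => //.
  exact: u0_cont.
Qed.

Lemma patch_vanishes_outside (S F Fe : set T) (u0 u1 : T -> X) : Fe `<=` F ->
  {ae mu, forall w, ~ S w -> u0 w = 0} ->
  {ae mu, forall w, ~ (S `|` F) w -> patch Fe u0 u1 w = 0}.
Proof.
move=> FeF; apply: filterS => w u0w /not_orP[Sw Fw].
by rewrite patch_out ?u0w // => /FeF.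
Qed.

End almost_decomposable.

Theorem lemma3p4p7 (d : measure_display) (T : measurableType d) (R : realType)
    (mu : {measure set T -> \bar R}) (X : completeNormedModType R)
    (phi : T -> X -> \bar R) :
  (0 < mu setT)%E ->
  orlicz_integrand mu phi -> real_valued_integrand mu phi ->
  almost_decomposable mu (C_phi mu phi) /\
  almost_decomposable mu (C_phi_sigma mu phi).
Proof.
move=> _ phiO phi_fin; have [phi_ge0 _ phi_meas] := phiO.
have [N [mN N0 /subsetCl phiN]] := orlicz_integrand_ae_finite_convex phiO phi_fin.
split=> [u0 F e u1 u0C mF F_fin e0 _ u1_meas|u0 F e u1 [u0C [S [S_sigma u0_S]]]].
  have [Fe FeP] :=
    C_phi_patch phi_ge0 phi_meas mN N0 phiN u0C mF F_fin e0 u1_meas.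
  by exists Fe.
move=> mF F_fin e0 _ u1_meas.
have [Fe [mFe FeF FeF_small FeC]] :=
  C_phi_patch phi_ge0 phi_meas mN N0 phiN u0C mF F_fin e0 u1_meas.
exists Fe; split => //; split => //; exists (S `|` F); split.
  exact/sigma_finiteU/fin_measure_sigma_finite.
exact: patch_vanishes_outside.
Qed.
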